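(* For all positive integers $\alpha,\beta,p$, $C(\alpha,\beta,p)\leq C_{2D}(\alpha,\beta,p)$.
   Context: Memory cells are binary; there are $n$ cells and cell-state vectors lie in $\{0,1\}^n$. For a real $R\ge 0$ write $[1:2^{nR}]=\{1,2,\ldots,\lfloor 2^{nR}\rfloor\}$. A code on $n$ cells consists, for each write $i\ge 1$, of a real $R_i\ge 0$ (the individual rate), an encoder $\mathcal{E}_i:[1:2^{nR_i}]\times\{0,1\}^n\to\{0,1\}^n$ and a decoder $\mathcal{D}_i:\{0,1\}^n\to[1:2^{nR_i}]$ with $\mathcal{D}_i(\mathcal{E}_i(m,\mathbf{u}))=m$ for all $m,\mathbf{u}$ (the encoder and decoder may depend on the write index $i$). Starting from the all-zero state $\mathbf{v}_0=\mathbf{0}$, a message sequence $m_1,m_2,\ldots$ produces states $\mathbf{v}_i=\mathcal{E}_i(m_i,\mathbf{v}_{i-1})=(v_{i,1},\ldots,v_{i,n})$. The rewrite cost of a write is the Hamming distance between consecutive states. For positive integers $\alpha,\beta,p$, the code is $(\alpha,\beta,p)$-constrained if for every message sequence, every $i\ge 0$ and every $1\le j\le n-\beta+1$, $$\big|\{(k,\ell): v_{i+k,j+\ell}\neq v_{i+k+1,j+\ell},\ 0\le k<\alpha,\ 0\le \ell<\beta\}\big|\le p,$$ i.e. over any $\alpha$ consecutive rewrites and any $\beta$ contiguous cells the total rewrite cost is at most $p$. The rate of the code is $R=\lim_{m\to\infty}\frac1m\sum_{i=1}^m R_i$. $C_n(\alpha,\beta,p)$ is the supremum of rates of $(\alpha,\beta,p)$-constrained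 codes on $n$ cells, and the $(\alpha,\beta,p)$-capacity is $C(\alpha,\beta,p)=\lim_{n\to\infty}C_n(\alpha,\beta,p)$. An $m\times n$ binary array is an $(a,b,p)$-array if every $a\times b$ sub-array formed by $a$ consecutive rows and $b$ consecutive columns contains at most $p$ ones. If $c(m,n)$ is the number of $m\times n$ $(a,b,p)$-arrays, then $C_{2D}(a,b,p)=\lim_{m,n\to\infty}\frac{\log_2 c(m,n)}{mn}$. *)

From mathcomp Require Import all_boot.
From Stdlib Require Import Reals.

Set Implicit Arguments.
Unset Strict Implicit.
Unset Printing Implicit Defensive.

Definition state (n : nat) := {ffun 'I_n -> bool}.
Definition zero_state (n : nat) : state n := [ffun => false].

Definition in_msg_range (n : nat) (Ri : R) (m : nat) : Prop :=
  (1 <= m)%N /\ (INR m <= Rpower 2 (INR n * Ri))%R.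

(* A (candidate) code on n cells: individual rates R_i, encoders E_i and
   decoders D_i, indexed by the write number i >= 1 (index 0 unused). *)
Record code (n : nat) := Code {
  rate_i : nat -> R;
  enc : nat -> nat -> state n -> state n;
  dec : nat -> state n -> nat }.

Definition code_valid (n : nat) (c : code n) : Prop :=
  forall i, (1 <= i)%N ->
    (0 <= rate_i c i)%R /\
    (forall v, in_msg_range n (rate_i c i) (dec c i v)) /\
    (forall m u, in_msg_range n (rate_i c i) m -> dec c i (enc c i m u) = m).

Definition valid_msgs (n : nat) (c : code n) (ms : nat -> nat) : Prop :=
  forall i, (1 <= i)%N -> in_msg_range n (rate_i c i) (ms i).

Fixpoint states (n : nat) (c : code n) (ms : nat -> nat) (i : nat) : state n :=
  match i with
  | 0 => zero_state n
  | i'.+1 => enc c i'.+1 (ms i'.+1) (states c ms i')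
  end.

(* (alpha,beta,p)-constrained: over any alpha consecutive rewrites and any
   beta contiguous cells (0-based start j with j + beta <= n), total
   rewrite cost <= p. *)
Definition constrained (alpha beta p n : nat) (c : code n) : Prop :=
  forall ms, valid_msgs c ms ->
  forall i j : nat, (j + beta <= n)%N ->
    (#|[set x : 'I_alpha * 'I_n |
         (j <= x.2 < j + beta)%N &&
         (states c ms (i + x.1) x.2 != states c ms (i + x.1).+1 x.2)]| <= p)%N.

(* Rate R = lim_{m -> oo} (1/m) sum_{i=1}^m R_i  (here indexed by m+1). *)
Definition has_rate (n : nat) (c : code n) (Rt : R) : Prop :=
  Un_cv (fun m => sum_f_R0 (fun k => rate_i c k.+1) m / INR m.+1)%R Rt.

Definition constrained_rates (alpha beta p n : nat) : R -> Prop :=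
  fun Rt => exists c : code n,
    code_valid c /\ constrained alpha beta p c /\ has_rate c Rt.

Definition num_arrays (a b p m n : nat) : nat :=
  #|[set A : {ffun 'I_m * 'I_n -> bool} |
     [forall i : 'I_m.+1, forall j : 'I_n.+1,
        ((i + a <= m)%N && (j + b <= n)%N) ==>
        (#|[set x : 'I_m * 'I_n |
             [&& A x, (i <= x.1 < i + a)%N & (j <= x.2 < j + b)%N]]| <= p)%N]]|.

Definition log2 (x : R) : R := (ln x / ln 2)%R.

Definition limit2 (f : nat -> nat -> R) (L : R) : Prop :=
  forall eps : R, (0 < eps)%R ->
    exists N : nat, forall m n : nat, (N <= m)%N -> (N <= n)%N ->
      (Rabs (f m n - L) < eps)%R.

From mathcomp Require Import all_boot zify.
From Stdlib Require Import Reals Lra.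
From Stdlib Require Znat.

Set Implicit Arguments.
Unset Strict Implicit.
Unset Printing Implicit Defensive.

(* Fix n cells and a valid constrained code.  Running it for M writes with the
   i-th message drawn from the floor(2^{n R_i}) admissible ones, the M x n array
   of changed cells (row t marks the cells rewritten by write t+1) is an
   (alpha,beta,p)-array, and it determines the message sequence: the states
   are recovered row by row from the zero state, and the messages from the
   states by the decoders.  Hence there are at least
   prod_i floor(2^{n R_i}) >= 2^{n (R_1 + ... + R_M) - M} such arrays, so the
   average rate over M writes is at most log2 c(M,n) / (M n) + 1/n.  Letting
   M and then n go to infinity gives C <= C_2D. *)

Lemma ln2_gt0 : (0 < ln 2)%R.
Proof. by rewrite -ln_1; apply: ln_increasing; lra. Qed.

Lemma log2_Rpower2 (y : R) : log2 (Rpower 2 y) = y.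
Proof. by rewrite /log2 /Rpower ln_exp; field; apply/Rgt_not_eq/ln2_gt0. Qed.

Lemma log2_2 : log2 2 = 1%R.
Proof. by rewrite -{1}(Rpower_1 2) ?log2_Rpower2; lra. Qed.

Lemma log2_le (x y : R) : (0 < x)%R -> (x <= y)%R -> (log2 x <= log2 y)%R.
Proof.
move=> x_gt0 le_xy; apply: Rmult_le_compat_r; first exact/Rlt_le/Rinv_0_lt_compat/ln2_gt0.
by case: (Rle_lt_or_eq_dec _ _ le_xy) => [/(ln_increasing _ _ x_gt0)|->]; lra.
Qed.

Lemma log2_mult (x y : R) :
  (0 < x)%R -> (0 < y)%R -> log2 (x * y) = (log2 x + log2 y)%R.
Proof. by move=> x_gt0 y_gt0; rewrite /log2 ln_mult //; field; apply/Rgt_not_eq/ln2_gt0. Qed.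

Lemma Rpower2_ge1 (y : R) : (0 <= y)%R -> (1 <= Rpower 2 y)%R.
Proof. by move=> y_ge0; rewrite -(Rpower_O 2); [apply: Rle_Rpower | ]; lra. Qed.

Lemma Rpower2_le_twice (y : R) (k : nat) :
  (0 < k)%N -> (Rpower 2 y <= 2 * INR k)%R -> (y - 1 <= log2 (INR k))%R.
Proof.
move=> k_gt0 le_y; have k_pos : (0 < INR k)%R by apply/lt_0_INR/ltP.
have := log2_le (exp_pos _) le_y.
by rewrite -/(Rpower 2 y) log2_Rpower2 log2_mult ?log2_2; lra.
Qed.

Lemma sum_le_log2_prod (y : nat -> R) (k : nat -> nat) M :
  (forall i, (i <= M)%N -> (0 < k i)%N /\ (y i <= log2 (INR (k i)))%R) ->
  (sum_f_R0 y M <= log2 (INR (\prod_(i < M.+1) k i)))%R.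
Proof.
elim: M => [|M IH] hk.
  by rewrite big_ord1; case: (hk 0%N).
have [k_gt0 y_le] := hk M.+1 (leqnn _).
have prod_gt0 : (0 < \prod_(i < M.+1) k i)%N.
  by apply: prodn_gt0 => i; have [] := hk i (ltnW (ltn_ord i)).
rewrite big_ord_recr /= mult_INR log2_mult; try by apply/lt_0_INR/ltP.
by apply: Rplus_le_compat => //; apply: IH => i le_iM; apply: hk; lia.
Qed.

Definition nat_floor (x : R) : nat := Z.to_nat (Int_part x).

Lemma nat_floor_spec (x : R) : (0 <= x)%R ->
  (INR (nat_floor x) <= x < INR (nat_floor x) + 1)%R.
Proof.
move=> x_ge0; have [le_x gt_x] := base_Int_part x.
have Int_ge0 : (0 <= Int_part x)%Z.
  suff : (-1 < Int_part x)%Z by lia.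
  by apply: lt_IZR; lra.
by rewrite /nat_floor INR_IZR_INZ Znat.Z2Nat.id //; lra.
Qed.

Lemma nat_floor_half (x : R) : (1 <= x)%R ->
  [/\ (0 < nat_floor x)%N, (INR (nat_floor x) <= x)%R & (x <= 2 * INR (nat_floor x))%R].
Proof.
move=> x_ge1; have [le_x lt_x] := @nat_floor_spec x ltac:(lra).
have floor_gt0 : (0 < nat_floor x)%N.
  by case: (nat_floor x) lt_x => [/= ?|//]; lra.
have : (1 <= INR (nat_floor x))%R by apply: (le_INR 1); apply/leP.
by split => //; lra.
Qed.

Lemma Un_cv_le_eventually (u : nat -> R) (l b : R) (N : nat) :
  Un_cv u l -> (forall m, (N <= m)%N -> (u m <= b)%R) -> (l <= b)%R.
Proof.
move=> u_l u_le; apply: Rle_plus_epsilon => e e_gt0.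
have [N1 close] := u_l e e_gt0.
have := close (maxn N N1) (leP (leq_maxr N N1)).
have := u_le (maxn N N1) (leq_maxl N N1).
by rewrite /R_dist; move=> ? /Rabs_def2; lra.
Qed.

Definition constrained_array (a b p m n : nat)
    (A : {ffun 'I_m * 'I_n -> bool}) : bool :=
  [forall i : 'I_m.+1, forall j : 'I_n.+1,
     ((i + a <= m)%N && (j + b <= n)%N) ==>
     (#|[set x : 'I_m * 'I_n |
          [&& A x, (i <= x.1 < i + a)%N & (j <= x.2 < j + b)%N]]| <= p)%N].

Lemma num_arraysE a b p m n : num_arrays a b p m n =
  #|[set A : {ffun 'I_m * 'I_n -> bool} | constrained_array a b p A]|.
Proof. by []. Qed.

Section RewritePatterns.

Variables (n : nat) (c : code n).

Definition rewrite_pattern (ms : nat -> nat) (M : nat) : {ffun 'I_M * 'I_n -> bool} :=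
  [ffun x : 'I_M * 'I_n => states c ms x.1 x.2 != states c ms x.1.+1 x.2].

Lemma rewrite_pattern_constrained alpha beta p ms M :
  constrained alpha beta p c -> valid_msgs c ms ->
  constrained_array alpha beta p (rewrite_pattern ms M).
Proof.
move=> c_constr ms_valid; apply/forallP => i; apply/forallP => j.
apply/implyP => /andP[iM jn]; apply: leq_trans (c_constr ms ms_valid i j jn).
have shift_lt (y : 'I_alpha) : (i + y < M)%N by rewrite (leq_trans _ iM) // ltn_add2l.
pose shift (y : 'I_alpha * 'I_n) := (Ordinal (shift_lt y.1), y.2).
apply: leq_trans (leq_imset_card shift _); apply/subset_leq_card/subsetP => z.
rewrite inE ffunE => /and3P[z_changed /andP[iz zi] z_in].
have z_lt : (z.1 - i < alpha)%N by rewrite ltn_subLR.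
apply/imsetP; exists (Ordinal z_lt, z.2).
  by rewrite inE /= subnKC // z_changed z_in.
case: z {z_changed zi z_in} iz z_lt => z1 z2 /= iz z_lt.
by apply/eqP; rewrite xpair_eqE -val_eqE /= subnKC ?eqxx.
Qed.

Lemma states_eq_of_rewrite_pattern_eq ms ms' M :
  rewrite_pattern ms M = rewrite_pattern ms' M ->
  forall t, (t <= M)%N -> states c ms t = states c ms' t.
Proof.
move=> same_pattern; elim => [//|t IH] tM; apply/ffunP => l.
have := congr1 (fun A : {ffun 'I_M * 'I_n -> bool} => A (Ordinal tM, l)) same_pattern.
rewrite !ffunE (IH (ltnW tM)).
by case: (states c ms' t l) (states c ms t.+1 l) (states c ms' t.+1 l) => [] [] [].
Qed.

Lemma dec_states ms t :
  code_valid c -> valid_msgs c ms -> dec c t.+1 (states c ms t.+1) = ms t.+1.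
Proof.
by move=> c_valid ms_valid; have [_ [_ ->]] := c_valid t.+1 isT; last exact: ms_valid.
Qed.

End RewritePatterns.

Section MessageChoices.

Variables (n : nat) (c : code n) (M : nat) (k : nat -> nat).
Hypothesis c_valid : code_valid c.
Hypothesis k_le :
  forall i, (i < M)%N -> (INR (k i) <= Rpower 2 (INR n * rate_i c i.+1))%R.

(* Write [j.+1] carries message [(f j).+1] for [j < M]; later writes carry message 1. *)

Definition msg_seq (f : {dffun forall i : 'I_M, 'I_(k i)}) (t : nat) : nat :=
  if t is i.+1 then oapp (fun j => (f j).+1) 1 (insub i : option 'I_M) else 1.

Lemma msg_seq_ord f (j : 'I_M) : msg_seq f j.+1 = (f j).+1.
Proof. by rewrite /= valK. Qed.

Lemma msg_seq_valid f : valid_msgs c (msg_seq f).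
Proof.
case=> [//|i] _; have [rate_ge0 _] := c_valid (ltn0Sn i).
have one_le := Rpower2_ge1 (Rmult_le_pos _ _ (pos_INR n) rate_ge0).
rewrite /=; case: insubP => [j _ <-|_] //=; split => //.
apply: Rle_trans (k_le (ltn_ord j)); exact/le_INR/leP.
Qed.

Lemma rewrite_pattern_msg_seq_inj :
  injective (fun f => rewrite_pattern c (msg_seq f) M).
Proof.
move=> f g /states_eq_of_rewrite_pattern_eq same_states; apply/ffunP => j; apply/val_inj.
apply: succn_inj; rewrite -!msg_seq_ord.
rewrite -(dec_states _ c_valid (msg_seq_valid f)) -(dec_states _ c_valid (msg_seq_valid g)).
by rewrite same_states.
Qed.

Lemma card_msg_choices : #|{dffun forall i : 'I_M, 'I_(k i)}| = \prod_(i < M) k i.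
Proof.
rewrite card_dep_ffun foldrE big_map big_enum.
by apply: eq_bigr => i _; rewrite card_ord.
Qed.

Lemma prod_le_num_arrays alpha beta p :
  constrained alpha beta p c -> (\prod_(i < M) k i <= num_arrays alpha beta p M n)%N.
Proof.
move=> c_constr; rewrite -card_msg_choices num_arraysE.
rewrite -(card_imset _ rewrite_pattern_msg_seq_inj).
apply/subset_leq_card/subsetP => _ /imsetP[f _ ->]; rewrite inE.
exact: rewrite_pattern_constrained (msg_seq_valid f).
Qed.

End MessageChoices.

Lemma log2_num_arrays_ge alpha beta p n (c : code n) M :
  code_valid c -> constrained alpha beta p c ->
  (INR n * sum_f_R0 (fun i => rate_i c i.+1) M - INR M.+1
     <= log2 (INR (num_arrays alpha beta p M.+1 n)))%R.
Proof.
move=> c_valid c_constr.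
pose k i := nat_floor (Rpower 2 (INR n * rate_i c i.+1)).
have k_spec i : [/\ (0 < k i)%N, (INR (k i) <= Rpower 2 (INR n * rate_i c i.+1))%R
                  & (Rpower 2 (INR n * rate_i c i.+1) <= 2 * INR (k i))%R].
  have [rate_ge0 _] := c_valid _ (ltn0Sn i).
  exact/nat_floor_half/Rpower2_ge1/Rmult_le_pos/rate_ge0/pos_INR.
have prod_gt0 : (0 < \prod_(i < M.+1) k i)%N.
  by apply: prodn_gt0 => i; case: (k_spec i).
have -> : (INR n * sum_f_R0 (fun i => rate_i c i.+1) M - INR M.+1
           = sum_f_R0 (fun i => INR n * rate_i c i.+1 - 1) M)%R.
  rewrite minus_sum sum_cte scal_sum.
  rewrite (sum_eq _ (fun i => INR n * rate_i c i.+1)%R) //; first lra.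
  by move=> i _; rewrite Rmult_comm.
have prod_le : (\prod_(i < M.+1) k i <= num_arrays alpha beta p M.+1 n)%N.
  by apply: (prod_le_num_arrays c_valid) => // i _; case: (k_spec i).
apply: Rle_trans (log2_le (lt_0_INR _ (ltP prod_gt0)) (le_INR _ _ (leP prod_le))).
apply: (sum_le_log2_prod (k := k)) => i _; have [k_gt0 _ le_k] := k_spec i.
by split => //; exact: Rpower2_le_twice.
Qed.

Lemma rate_le_array_bound alpha beta p n (c : code n) (Rt b : R) N :
  (0 < n)%N ->
  (forall m, (N <= m)%N ->
     (log2 (INR (num_arrays alpha beta p m n)) / (INR m * INR n) <= b)%R) ->
  code_valid c -> constrained alpha beta p c -> has_rate c Rt ->
  (Rt <= b + / INR n)%R.
Proof.
move=> n_gt0 arrays_le c_valid c_constr c_rate.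
apply: (Un_cv_le_eventually (N := N) c_rate) => m le_Nm.
have n_pos : (0 < INR n)%R by apply/lt_0_INR/ltP.
have m_pos : (0 < INR m.+1)%R by apply/lt_0_INR/ltP.
have := log2_num_arrays_ge m c_valid c_constr.
have := arrays_le m.+1 (leqW le_Nm).
set S := sum_f_R0 _ m; set L := log2 _ => L_le S_le.
suff : (S / INR m.+1 <= L / (INR m.+1 * INR n) + / INR n)%R by lra.
have -> : (S / INR m.+1 = (INR n * S) / (INR m.+1 * INR n))%R by field; lra.
have -> : (L / (INR m.+1 * INR n) + / INR n = (L + INR m.+1) / (INR m.+1 * INR n))%R.
  by field; lra.
by apply: Rmult_le_compat_r; [apply/Rlt_le/Rinv_0_lt_compat/Rmult_lt_0_compat | lra].
Qed.

Theorem theorem1 (alpha beta p : nat) :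
  (0 < alpha)%N -> (0 < beta)%N -> (0 < p)%N ->
  forall (Cn : nat -> R) (C C2D : R),
    (forall n : nat, (0 < n)%N -> is_lub (constrained_rates alpha beta p n) (Cn n)) ->
    Un_cv Cn C ->
    limit2 (fun m n => (log2 (INR (num_arrays alpha beta p m n)) / (INR m * INR n))%R) C2D ->
    (C <= C2D)%R.
Proof.
move=> _ _ _ Cn C C2D Cn_lub Cn_C arrays_C2D.
apply: Rle_plus_epsilon => e e_gt0.
have [N close] := arrays_C2D (e / 2)%R ltac:(lra).
have [N' [invN'_lt /leP N'_gt0]] := archimed_cor1 (e / 2) ltac:(lra).
apply: (Un_cv_le_eventually (N := maxn N N') Cn_C) => n.
rewrite geq_max => /andP[le_Nn le_N'n].
have n_gt0 : (0 < n)%N := leq_trans N'_gt0 le_N'n.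
have : (/ INR n <= / INR N')%R.
  by apply/Rinv_le_contravar/le_INR/leP; [apply/lt_0_INR/ltP|].
suff : (Cn n <= C2D + e / 2 + / INR n)%R by lra.
apply: (Cn_lub n n_gt0).2 => Rt [c [c_valid [c_constr c_rate]]].
apply: rate_le_array_bound n_gt0 _ c_valid c_constr c_rate => m le_Nm.
by have /Rabs_def2 := close m n le_Nm le_Nn; lra.
Qed.
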